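(* Let $\Gamma$ be an Arf numerical semigroup with multiplicity $e$ and conductor $c$. Let $e'\in\Gamma\setminus\{0,e\}$, $\Gamma_{e'}=\{0\}\cup(e'+\Gamma)$ and $c'=c+e'$. Then \[ \delta^2_{\Gamma_{e'}}(c'+e'+k)=\delta^2_\Gamma(c+k)+3\quad\text{for all }k\in\mathbb N. \]
   Context: A numerical semigroup is a subset $\Gamma\subseteq\mathbb N$ containing $0$, closed under addition, with finite complement; write $\Gamma=\{0=\rho_1<\rho_2<\cdots\}$; multiplicity $e=\rho_2$; conductor = least $c$ with $c+\mathbb N\subseteq\Gamma$. $\Gamma$ is Arf if $\rho_i+\rho_j-\rho_k\in\Gamma$ for all $i\ge j\ge k$. For a numerical semigroup $S$: $D_S(x)=\{s\in S:x-s\in S\}$ and $\delta^2_S(m)=\min\{|D_S(m_1)\cup D_S(m_2)|: m\le m_1<m_2,\ m_i\in S\}$. *)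

From mathcomp Require Import all_boot.
Set Implicit Arguments. Unset Strict Implicit. Unset Printing Implicit Defensive.

Definition numerical_semigroup (S : pred nat) : Prop :=
  [/\ S 0,
      (forall x y, S x -> S y -> S (x + y)) &
      exists N, forall n, N <= n -> S n].

Definition is_multiplicity (S : pred nat) (e : nat) : Prop :=
  [/\ 0 < e, S e & forall s, S s -> 0 < s -> e <= s].

Definition is_conductor (S : pred nat) (c : nat) : Prop :=
  (forall n, c <= n -> S n) /\
  (forall c0, (forall n, c0 <= n -> S n) -> c <= c0).

Definition arf (S : pred nat) : Prop :=
  forall x y z, S x -> S y -> S z -> y <= x -> z <= y -> S (x + y - z).

Definition Dset (S : pred nat) (x : nat) : seq nat :=
  [seq s <- iota 0 x.+1 | S s && S (x - s)].

Definition card_D_union (S : pred nat) (m1 m2 : nat) : nat :=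
  size (undup (Dset S m1 ++ Dset S m2)).

Definition is_delta2 (S : pred nat) (m d : nat) : Prop :=
  (exists m1 m2, [/\ m <= m1, m1 < m2, S m1, S m2 & card_D_union S m1 m2 = d]) /\
  (forall m1 m2, m <= m1 -> m1 < m2 -> S m1 -> S m2 -> d <= card_D_union S m1 m2).

Definition shift_sg (S : pred nat) (e' : nat) : pred nat :=
  fun n => (n == 0) || ((e' <= n) && S (n - e')).

(** Above the conductor every number lies in [G], so for [y >= c] the set
    [D_{G_e'}(y + 2e')] is [{0, y + 2e'}] together with the translate
    [e' + D_G(y)].  Hence for [c <= y1 < y2] the shifted union has
    [|D_G(y1) u D_G(y2)| + 2] elements, plus one more unless [y1 + e'] already
    lies in [D_G(y2)].  Replacing [y2] by [y2 - e] strictly shrinks the union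
    ([D(y2 - e)] is contained in [D(y2)], which also contains [y2]), so a minimal
    pair above [c + k] has gap at most [e < e'] and gets the extra element,
    while any pair that avoids it has gap larger than [e] and was not minimal. *)
From mathcomp Require Import all_boot zify.

Set Implicit Arguments.
Unset Strict Implicit.
Unset Printing Implicit Defensive.

Lemma mem_Dset (S : pred nat) x s : (s \in Dset S x) = [&& s <= x, S s & S (x - s)].
Proof. by rewrite /Dset mem_filter mem_iota add0n ltnS andbC. Qed.

Lemma size_undup_ltn (T : eqType) (s1 s2 : seq T) x :
  {subset s1 <= s2} -> x \in s2 -> x \notin s1 -> size (undup s1) < size (undup s2).
Proof.
move=> s12 xs2 xNs1; rewrite ltnNge; apply/negP => le21.
have sub : {subset undup s1 <= undup s2} by move=> y; rewrite !mem_undup => /s12.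
have := (uniq_min_size (undup_uniq s1) sub le21).2 x.
by rewrite !mem_undup xs2 (negPf xNs1).
Qed.

Section DeltaMonotone.

Variable S : pred nat.
Hypothesis S0 : S 0.
Hypothesis SD : forall x y, S x -> S y -> S (x + y).

Lemma Dset_sub_add a x : S a -> {subset Dset S x <= Dset S (x + a)}.
Proof.
move=> Sa s; rewrite !mem_Dset => /and3P [sx Ss Sxs].
by rewrite Ss (leq_trans sx (leq_addr _ _)) -addnBAC // SD.
Qed.

Lemma card_D_union_add_ltn m1 m2 a : S a -> 0 < a -> S m2 -> m1 < m2 ->
  card_D_union S m1 m2 < card_D_union S m1 (m2 + a).
Proof.
move=> Sa a_gt0 Sm2 m12; apply: (@size_undup_ltn _ _ _ (m2 + a)).
- by move=> s; rewrite !mem_cat => /orP [-> // | /(Dset_sub_add Sa) ->]; rewrite orbT.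
- by rewrite mem_cat !mem_Dset leqnn subnn S0 SD ?orbT.
- by rewrite mem_cat !mem_Dset negb_or; apply/andP; split; apply/negP => /and3P []; lia.
Qed.

Lemma delta2_ltn_card c m d a y1 y2 : (forall n, c <= n -> S n) ->
  is_delta2 S m d -> c <= m -> S a -> 0 < a -> m <= y1 -> y1 + a < y2 ->
  d < card_D_union S y1 y2.
Proof.
move=> Sc [_ d_min] cm Sa a_gt0 my1 y12; have -> : y2 = (y2 - a) + a by lia.
have [Sy1 Sy2a] : S y1 /\ S (y2 - a) by split; apply: Sc; lia.
apply: leq_ltn_trans (d_min _ _ my1 _ Sy1 Sy2a) (card_D_union_add_ltn Sa a_gt0 Sy2a _); lia.
Qed.

End DeltaMonotone.

Section Shift.

Variables (G : pred nat) (e' : nat).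
Hypothesis e'_gt0 : 0 < e'.

Lemma shift_sg_addn x : G x -> shift_sg G e' (x + e').
Proof. by move=> Gx; rewrite /shift_sg leq_addl addnK Gx orbT. Qed.

Lemma mem_Dset_shift y x : G (y + e') ->
  (x \in Dset (shift_sg G e') (y + e' + e')) =
  [|| x == 0, x == y + e' + e' | x \in map (addn e') (Dset G y)].
Proof.
move=> Gy; rewrite mem_Dset /shift_sg.
have [xe'|/subnKC <-] := ltnP x e'.
  have /negPf -> : x \notin map (addn e') (Dset G y) by apply/mapP => -[u _]; lia.
  have [-> | x_gt0] := posnP x; first by rewrite subn0 leq_addl addnK Gy !orbT.
  by rewrite /= orbF andbF; apply/esym/negbTE; lia.
move: (x - e') => u; rewrite (mem_map (@addnI e')).
rewrite addKn mem_Dset; have /negbTE -> : e' + u != 0 by lia.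
have [-> | uY] := eqVneq u (y + e').
  have -> : y + e' + e' - (e' + (y + e')) = 0 by lia.
  by rewrite eqxx Gy [e' + _]addnC eqxx leqnn orbT.
have /negbTE -> : e' + u != y + e' + e' by lia.
have [uy | yu] := leqP u y.
  have -> : y + e' + e' - (e' + u) = (y - u) + e' by lia.
  have -> : e' + u <= y + e' + e' by lia.
  by rewrite addnK leq_addl addn_eq0 (negbTE (lt0n_neq0 e'_gt0)) andbF.
have [uYl | uYg] := ltnP u (y + e'); last first.
  by have /negbTE -> : ~~ (e' + u <= y + e' + e') by lia.
have /negbTE -> : y + e' + e' - (e' + u) != 0 by lia.
have /negbTE -> : ~~ (e' <= y + e' + e' - (e' + u)) by lia.
by rewrite !andbF.
Qed.

Lemma card_D_union_shift y1 y2 : y1 < y2 -> G (y1 + e') -> G (y2 + e') ->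
  card_D_union (shift_sg G e') (y1 + e' + e') (y2 + e' + e')
  = card_D_union G y1 y2 + 2 + (y1 + e' \notin Dset G y2).
Proof.
move=> y12 Gy1 Gy2; rewrite /card_D_union.
set U := undup (Dset G y1 ++ Dset G y2).
have memU x : (x \in map (addn e') U) = (e' <= x) && (x - e' \in U).
  apply/mapP/andP => [[u uU ->] | [xe' xU]]; first by rewrite leq_addr addKn.
  by exists (x - e'); rewrite ?subnKC.
have same : Dset (shift_sg G e') (y1 + e' + e') ++ Dset (shift_sg G e') (y2 + e' + e')
    =i [:: 0, y2 + e' + e', y1 + e' + e' & map (addn e') U].
  move=> x; rewrite mem_cat !mem_Dset_shift // !inE (eq_mem_map _ (mem_undup _)).
  by rewrite map_cat mem_cat; do 3!case: eqP; do 2!case: (x \in _).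
have U_y2 : (y2 + e' \in U) = false.
  rewrite mem_undup mem_cat !mem_Dset.
  by apply/negbTE/negP => /orP [] /and3P []; lia.
have U_y1 : (y1 + e' \in U) = (y1 + e' \in Dset G y2).
  rewrite mem_undup mem_cat {1}mem_Dset.
  by have /negbTE -> : ~~ (y1 + e' <= y1) by lia.
rewrite (perm_size (perm_undup same)) /= !inE !memU !addnK U_y1 U_y2.
rewrite !leq_addl andbF orbF !eqn_add2r (gtn_eqF y12).
rewrite leqNgt e'_gt0 !(eq_sym 0) !addn_eq0 (negbTE (lt0n_neq0 e'_gt0)) !andbF /=.
have uniq_map : uniq (map (addn e') U) by rewrite (map_inj_uniq (@addnI e')) undup_uniq.
by rewrite (undup_id uniq_map); case: (_ \in _); rewrite /= size_map; lia.
Qed.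

End Shift.

Theorem lemma4p13 (G : pred nat) (e c e' : nat) :
  numerical_semigroup G -> arf G ->
  is_multiplicity G e -> is_conductor G c ->
  G e' -> e' != 0 -> e' != e ->
  forall k d : nat,
    is_delta2 G (c + k) d ->
    is_delta2 (shift_sg G e') ((c + e') + e' + k) (d + 3).
Proof.
move=> [G0 GD _] _ [e_gt0 Ge e_min] [Gc _] Ge' e'0 e'e k d delta.
have e_lt_e' : e < e' by have := e_min e' Ge'; lia.
have gap_gt_e y1 y2 : c + k <= y1 -> y1 + e < y2 -> d < card_D_union G y1 y2.
  exact: (delta2_ltn_card G0 GD Gc delta (leq_addr k c) Ge e_gt0).
have shift y1 y2 : c + k <= y1 -> y1 < y2 ->
    card_D_union (shift_sg G e') (y1 + e' + e') (y2 + e' + e')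
    = card_D_union G y1 y2 + 2 + (y1 + e' \notin Dset G y2).
  by move=> ky1 y12; apply: card_D_union_shift => //; [lia | apply: Gc; lia..].
have [[m1 [m2 [km1 m12 _ _ dm]]] d_min] := delta.
split.
  exists (m1 + e' + e'), (m2 + e' + e'); split; try lia;
    try by apply: shift_sg_addn; apply: Gc; lia.
  have m2_le : m2 <= m1 + e by rewrite leqNgt; apply/negP => /(gap_gt_e _ _ km1); lia.
  rewrite (shift _ _ km1 m12) dm mem_Dset; have /negbTE -> : ~~ (m1 + e' <= m2) by lia.
  by rewrite /= -addnA.
move=> M1 M2 kM1 M12 _ _.
have [y1 M1E] : exists y1, M1 = y1 + e' + e' by exists (M1 - (e' + e')); lia.
have [y2 M2E] : exists y2, M2 = y2 + e' + e' by exists (M2 - (e' + e')); lia.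
subst M1 M2.
have ky1 : c + k <= y1 by lia.
have y12 : y1 < y2 by lia.
rewrite (shift _ _ ky1 y12).
have [y1e'D | _] := boolP (y1 + e' \in Dset G y2).
  have y1e : y1 + e < y2 by move: y1e'D; rewrite mem_Dset => /and3P []; lia.
  by have := gap_gt_e _ _ ky1 y1e; lia.
have Gy1 : G y1 by apply: Gc; lia.
have Gy2 : G y2 by apply: Gc; lia.
by have := d_min _ _ ky1 y12 Gy1 Gy2; lia.
Qed.
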